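(* Let $\mathcal{C}$ be a skeletally small triangulated category and $\mathcal{D}$ a radical dense subcategory of $\mathcal{C}$. If $U\in\mathcal{C}$ and $[U]$ is a torsion element of $G(\mathcal{C})$, then $U\in\mathcal{D}$.
   Context: $G(\mathcal{C})$ is the Grothendieck group of $\mathcal{C}$ (free abelian group on isomorphism classes modulo $[V]=[U]+[W]$ for exact triangles $U\to V\to W\to U[1]$). A dense subcategory is a triangulated subcategory $\mathcal{D}$ (full, closed under $[\pm1]$, isomorphisms and cones) such that for every $U\in\mathcal{C}$ there is $V$ with $U\oplus V\in\mathcal{D}$; it is radical if $U^n\in\mathcal{D}$ for some $n\ge1$ implies $U\in\mathcal{D}$. *)

From HB Require Import structures.
From mathcomp Require Import all_boot all_algebra.
From Stdlib Require Import ClassicalEpsilon.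
Import GRing.Theory.
Local Open Scope ring_scope.

Record preadd := PreAdd {
  Obj : Type;
  Hom : Obj -> Obj -> zmodType;
  comp : forall X Y Z : Obj, Hom Y Z -> Hom X Y -> Hom X Z;   (* comp g f = g o f *)
  idm : forall X : Obj, Hom X X;
  compA : forall X Y Z W (h : Hom Z W) (g : Hom Y Z) (f : Hom X Y),
      comp _ _ _ h (comp _ _ _ g f) = comp _ _ _ (comp _ _ _ h g) f;
  comp1m : forall X Y (f : Hom X Y), comp _ _ _ (idm Y) f = f;
  compm1 : forall X Y (f : Hom X Y), comp _ _ _ f (idm X) = f;
  compDl : forall X Y Z (g g' : Hom Y Z) (f : Hom X Y),
      comp _ _ _ (g + g') f = comp _ _ _ g f + comp _ _ _ g' f;
  compDr : forall X Y Z (g : Hom Y Z) (f f' : Hom X Y),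
      comp _ _ _ g (f + f') = comp _ _ _ g f + comp _ _ _ g f'
}.

Arguments Hom {p}.
Arguments comp {p X Y Z}.
Arguments idm {p} X.
Notation "g \oc f" := (comp g f) (at level 40, left associativity).

Section PreaddDefs.
Variable C : preadd.

Definition is_iso {X Y : Obj C} (f : Hom X Y) : Prop :=
  exists g : Hom Y X, g \oc f = idm X /\ f \oc g = idm Y.

Definition iso (X Y : Obj C) : Prop := exists f : Hom X Y, is_iso f.

Definition is_zero_obj (Z : Obj C) : Prop :=
  forall X : Obj C, (forall f : Hom X Z, f = 0) /\ (forall f : Hom Z X, f = 0).

Definition is_biprod (S U V : Obj C) (i1 : Hom U S) (i2 : Hom V S)
    (p1 : Hom S U) (p2 : Hom S V) : Prop :=
  [/\ p1 \oc i1 = idm U, p2 \oc i2 = idm V, p1 \oc i2 = 0, p2 \oc i1 = 0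
    & i1 \oc p1 + i2 \oc p2 = idm S].

Definition is_dsum (S U V : Obj C) : Prop :=
  exists i1 i2 p1 p2, @is_biprod S U V i1 i2 p1 p2.

Fixpoint is_pow (U : Obj C) (n : nat) : Obj C -> Prop :=
  match n with
  | 0 => fun S => is_zero_obj S
  | n'.+1 => fun S => exists T, is_pow U n' T /\ is_dsum S T U
  end.
End PreaddDefs.

Arguments is_iso {C X Y}.
Arguments iso {C}.
Arguments is_zero_obj {C}.
Arguments is_dsum {C}.
Arguments is_pow {C}.

Record addcat := AddCat {
  ac_pre :> preadd;
  zero_ex : exists Z : Obj ac_pre, is_zero_obj Z;
  dsum_ex : forall X Y : Obj ac_pre, exists S, is_dsum S X Y
}.

Record triang (C : addcat) := Triang {
  sh : Obj C -> Obj C;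
  shm : forall X Y : Obj C, Hom X Y -> Hom (sh X) (sh Y);
  shm_id : forall X, shm _ _ (idm X) = idm (sh X);
  shm_comp : forall X Y Z (g : Hom Y Z) (f : Hom X Y),
      shm _ _ (g \oc f) = shm _ _ g \oc shm _ _ f;
  shm_add : forall X Y (f f' : Hom X Y), shm _ _ (f + f') = shm _ _ f + shm _ _ f';
  (* [1] is an autoequivalence: fully faithful and essentially surjective *)
  shm_bij : forall X Y, bijective (shm X Y);
  sh_esurj : forall Y, exists X, iso (sh X) Y;
  dist : forall X Y Z : Obj C, Hom X Y -> Hom Y Z -> Hom Z (sh X) -> Prop;
  dist_iso : forall X Y Z X' Y' Z' (f : Hom X Y) (g : Hom Y Z) (h : Hom Z (sh X))
      (f' : Hom X' Y') (g' : Hom Y' Z') (h' : Hom Z' (sh X'))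
      (a : Hom X X') (b : Hom Y Y') (c : Hom Z Z'),
      is_iso a -> is_iso b -> is_iso c ->
      b \oc f = f' \oc a -> c \oc g = g' \oc b -> shm _ _ a \oc h = h' \oc c ->
      dist _ _ _ f g h -> dist _ _ _ f' g' h';
  dist_id : forall X Z, is_zero_obj Z ->
      dist X X Z (idm X) 0 0;
  dist_ext : forall X Y (f : Hom X Y), exists Z (g : Hom Y Z) (h : Hom Z (sh X)),
      dist _ _ _ f g h;
  dist_rot : forall X Y Z (f : Hom X Y) (g : Hom Y Z) (h : Hom Z (sh X)),
      dist _ _ _ f g h <-> dist _ _ _ g h (- shm _ _ f);
  dist_morph : forall X Y Z X' Y' Z' (f : Hom X Y) (g : Hom Y Z) (h : Hom Z (sh X))
      (f' : Hom X' Y') (g' : Hom Y' Z') (h' : Hom Z' (sh X'))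
      (a : Hom X X') (b : Hom Y Y'),
      dist _ _ _ f g h -> dist _ _ _ f' g' h' -> b \oc f = f' \oc a ->
      exists c : Hom Z Z', c \oc g = g' \oc b /\ shm _ _ a \oc h = h' \oc c;
  dist_oct : forall X Y Z Z' X' Y' (f : Hom X Y) (g : Hom Y Z)
      (f1 : Hom Y Z') (f2 : Hom Z' (sh X))
      (g1 : Hom Z X') (g2 : Hom X' (sh Y))
      (h1 : Hom Z Y') (h2 : Hom Y' (sh X)),
      dist _ _ _ f f1 f2 -> dist _ _ _ g g1 g2 -> dist _ _ _ (g \oc f) h1 h2 ->
      exists (u : Hom Z' Y') (v : Hom Y' X'),
        [/\ dist _ _ _ u v (shm _ _ f1 \oc g2),
            u \oc f1 = h1 \oc g, h2 \oc u = f2,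
            v \oc h1 = g1 & g2 \oc v = shm _ _ f \oc h2]
}.

Arguments sh {C}.
Arguments shm {C} t {X Y}.
Arguments dist {C} t {X Y Z}.

Section Groth.
Variables (C : addcat) (T : triang C).

(* The generator [U] of the free abelian group on isomorphism classes of
   objects, realized (injectively) as the indicator function of the
   isomorphism class of U, with values in int. *)
Definition gen (U : Obj C) : Obj C -> int :=
  fun X => if excluded_middle_informative (iso X U) then 1 else 0.

(* The subgroup of relations [V] - [U] - [W] for distinguished triangles
   U -> V -> W -> U[1]; G(C) is the quotient of the free group by it. *)
Inductive groth_rel : (Obj C -> int) -> Prop :=
| gr_tri : forall U V W (f : Hom U V) (g : Hom V W) (h : Hom W (sh T U)),
    dist T f g h -> groth_rel (fun X => gen V X - gen U X - gen W X)
| gr_zero : groth_rel (fun _ => 0)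
| gr_add : forall a b, groth_rel a -> groth_rel b -> groth_rel (fun X => a X + b X)
| gr_opp : forall a, groth_rel a -> groth_rel (fun X => - a X).

Definition groth_torsion (U : Obj C) : Prop :=
  exists n : nat, (0 < n)%N /\ groth_rel (fun X => gen U X *+ n).

Definition triang_sub (D : Obj C -> Prop) : Prop :=
  [/\ (forall X Y, iso X Y -> D X -> D Y),
      (forall X, D X -> D (sh T X)),
      (forall X, D (sh T X) -> D X)
    & (forall X Y Z (f : Hom X Y) (g : Hom Y Z) (h : Hom Z (sh T X)),
         dist T f g h -> D X -> D Y -> D Z)].

Definition dense_sub (D : Obj C -> Prop) : Prop :=
  triang_sub D /\ forall U, exists V S, is_dsum S U V /\ D S.

Definition radical_sub (D : Obj C -> Prop) : Prop :=
  forall U (n : nat) S, (1 <= n)%N -> is_pow U n S -> D S -> D U.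
End Groth.

Arguments gen {C}.
Arguments groth_rel {C}.
Arguments groth_torsion {C}.
Arguments triang_sub {C}.
Arguments dense_sub {C}.
Arguments radical_sub {C}.

(* Write X ~ Y when X (+) D1 and Y (+) D2 are isomorphic for some D1, D2 in D.
   Density makes every distinguished triangle X -> Y -> Z satisfy Y ~ X (+) Z, so
   a relation [P1] + ... + [Pk] = [N1] + ... + [Nl] in G(C) forces
   P1 (+) ... (+) Pk ~ N1 (+) ... (+) Nl.  If n[U] = 0 this gives N ~ U^n (+) N for
   some object N; adding a complement of N in D shows U^n ~ 0, i.e. U^n lies in D,
   and radicality gives U in D. *)

From Pilot Require Import Defs.
From HB Require Import structures.
From mathcomp Require Import all_boot all_algebra.
From Stdlib Require Import ClassicalEpsilon.
From mathcomp Require Import zify.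
Import GRing.Theory Num.Theory.
Set Implicit Arguments. Unset Strict Implicit. Unset Printing Implicit Defensive.
Local Notation Hom := Defs.Hom.
Local Open Scope ring_scope.
Arguments comp1m {p X Y}.
Arguments compm1 {p X Y}.
Arguments compDl {p X Y Z}.
Arguments compDr {p X Y Z}.
Arguments shm_bij {C} t X Y.
Arguments dist_iso {C t X Y Z X' Y' Z' f g h f' g' h' a b c}.
Arguments dist_id {C} t X {Z}.
Arguments dist_ext {C} t {X Y}.
Arguments dist_rot {C t X Y Z f g h}.
Arguments sh_esurj {C} t Y.
Arguments dist_morph {C t X Y Z X' Y' Z' f g h f' g' h' a b}.

Section Preadditive.
Variable C : preadd.
Implicit Types X Y Z W : Obj C.

Lemma comp_assoc X Y Z W (h : Hom Z W) (g : Hom Y Z) (f : Hom X Y) :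
  h \oc (g \oc f) = (h \oc g) \oc f.
Proof. exact: Defs.compA. Qed.

Lemma comp0m X Y Z (f : Hom X Y) : (0 : Hom Y Z) \oc f = 0.
Proof. by apply: (addrI ((0 : Hom Y Z) \oc f)); rewrite -compDl !addr0. Qed.

Lemma compm0 X Y Z (g : Hom Y Z) : g \oc (0 : Hom X Y) = 0.
Proof. by apply: (addrI (g \oc (0 : Hom X Y))); rewrite -compDr !addr0. Qed.

Lemma compNl X Y Z (g : Hom Y Z) (f : Hom X Y) : (- g) \oc f = - (g \oc f).
Proof. by apply: (addIr (g \oc f)); rewrite -compDl !addNr comp0m. Qed.

Lemma compNr X Y Z (g : Hom Y Z) (f : Hom X Y) : g \oc (- f) = - (g \oc f).
Proof. by apply: (addIr (g \oc f)); rewrite -compDr !addNr compm0. Qed.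

Lemma compBl X Y Z (g g' : Hom Y Z) (f : Hom X Y) : (g - g') \oc f = g \oc f - g' \oc f.
Proof. by rewrite compDl compNl. Qed.

Lemma compBr X Y Z (g : Hom Y Z) (f f' : Hom X Y) : g \oc (f - f') = g \oc f - g \oc f'.
Proof. by rewrite compDr compNr. Qed.

Lemma compAK X Y (h : Hom Y X) (g : Hom X Y) : h \oc g = idm X ->
  forall W (r : Hom W X), h \oc (g \oc r) = r.
Proof. by move=> hg W r; rewrite comp_assoc hg comp1m. Qed.

Lemma compA0 X Y Z (h : Hom Y Z) (g : Hom X Y) : h \oc g = 0 ->
  forall W (r : Hom W X), h \oc (g \oc r) = 0.
Proof. by move=> hg W r; rewrite comp_assoc hg comp0m. Qed.

Lemma is_iso_idm X : is_iso (idm X).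
Proof. by exists (idm X); rewrite comp1m. Qed.

Lemma is_iso_sub_nilp X (n : Hom X X) : n \oc n = 0 -> is_iso (idm X - n).
Proof.
move=> nn; exists (idm X + n); split.
  by rewrite compBr !compDl !comp1m !compm1 nn addr0 addrK.
by rewrite compBl !compDr !comp1m !compm1 nn addr0 addrK.
Qed.

Lemma is_iso_retraction X Y (s : Hom X Y) (r : Hom Y X) :
  s \oc r = idm Y -> is_iso (r \oc s) -> is_iso s.
Proof.
move=> sr [e [e_rs rs_e]]; exists r; split => //.
have er : e \oc r = r.
  by rewrite -[r in LHS]compm1 -sr (comp_assoc r) (comp_assoc e) e_rs comp1m.
by rewrite -er -comp_assoc.
Qed.

Lemma iso_refl X : iso X X.
Proof. by exists (idm X); exact: is_iso_idm. Qed.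

Lemma iso_sym X Y : iso X Y -> iso Y X.
Proof. by case=> f [g [gf fg]]; exists g, f. Qed.

Lemma iso_trans X Y Z : iso X Y -> iso Y Z -> iso X Z.
Proof.
case=> f [f' [f'f ff']] [g [g' [g'g gg']]]; exists (g \oc f), (f' \oc g'); split.
  by rewrite -comp_assoc (compAK g'g).
by rewrite -comp_assoc (compAK ff').
Qed.

Lemma zero_obj_idm Z : is_zero_obj Z -> idm Z = 0.
Proof. by move=> Z0; apply: (Z0 Z).1. Qed.

Lemma idm_zero_obj Z : idm Z = 0 -> is_zero_obj Z.
Proof.
move=> Z0 X; split=> f; first by rewrite -[f]comp1m Z0 comp0m.
by rewrite -[f]compm1 Z0 compm0.
Qed.

Lemma biprod_ext S X Y i1 i2 p1 p2 : @is_biprod C S X Y i1 i2 p1 p2 ->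
  forall W (u v : Hom W S), p1 \oc u = p1 \oc v -> p2 \oc u = p2 \oc v -> u = v.
Proof.
case=> _ _ _ _ ip W u v e1 e2.
by rewrite -[u]comp1m -[v]comp1m -ip !compDl -!comp_assoc e1 e2.
Qed.

Lemma dsum_iso S X Y S' X' Y' : is_dsum S X Y -> is_dsum S' X' Y' ->
  iso X X' -> iso Y Y' -> iso S S'.
Proof.
case=> i1 [i2 [p1 [p2 [e11 e22 e12 e21 ip]]]].
case=> j1 [j2 [q1 [q2 [f11 f22 f12 f21 jq]]]].
case=> a [a' [a'a aa']] [b [b' [b'b bb']]].
exists (j1 \oc (a \oc p1) + j2 \oc (b \oc p2)).
exists (i1 \oc (a' \oc q1) + i2 \oc (b' \oc q2)).
split; rewrite !compDl !compDr -!comp_assoc.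
  rewrite !(compAK f11) !(compAK f22) !(compA0 f12) !(compA0 f21) !compm0 addr0 add0r.
  by rewrite !(compAK a'a) !(compAK b'b).
rewrite !(compAK e11) !(compAK e22) !(compA0 e12) !(compA0 e21) !compm0 addr0 add0r.
by rewrite !(compAK aa') !(compAK bb').
Qed.

Lemma dsumC S X Y : is_dsum S X Y -> is_dsum S Y X.
Proof.
case=> i1 [i2 [p1 [p2 [e11 e22 e12 e21 ip]]]].
by exists i2, i1, p2, p1; split; rewrite // addrC.
Qed.

Lemma dsum_zero_obj S X Z : is_zero_obj Z -> is_dsum S X Z -> iso S X.
Proof.
move=> Z0 [i1 [i2 [p1 [p2 [e11 _ _ _ ip]]]]].
by exists p1, i1; split; rewrite // -ip ((Z0 S).1 p2) compm0 addr0.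
Qed.

Lemma dsumA S1 S X Y Z S2 S' : is_dsum S1 X Y -> is_dsum S S1 Z ->
  is_dsum S2 Y Z -> is_dsum S' X S2 -> iso S S'.
Proof.
case=> i1 [i2 [p1 [p2 B1]]]; have [e11 e22 e12 e21 _] := B1.
case=> k1 [k2 [r1 [r2 B2]]]; have [g11 g22 g12 g21 _] := B2.
case=> j1 [j2 [q1 [q2 B3]]]; have [f11 f22 f12 f21 _] := B3.
case=> l1 [l2 [s1 [s2 B4]]]; have [h11 h22 h12 h21 _] := B4.
exists (l1 \oc (p1 \oc r1) + l2 \oc (j1 \oc (p2 \oc r1)) + l2 \oc (j2 \oc r2)).
exists (k1 \oc (i1 \oc s1) + k1 \oc (i2 \oc (q1 \oc s2)) + k2 \oc (q2 \oc s2)).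
split; [apply: (biprod_ext B2) | apply: (biprod_ext B4)];
  rewrite ?compm1 ?compDl ?compDr -?comp_assoc;
  rewrite ?(compAK h11) ?(compAK h22) ?(compA0 h12) ?(compA0 h21);
  rewrite ?(compAK g11) ?(compAK g22) ?(compA0 g12) ?(compA0 g21);
  rewrite ?(compAK f11) ?(compAK f22) ?(compA0 f12) ?(compA0 f21);
  rewrite ?(compAK e11) ?(compAK e22) ?(compA0 e12) ?(compA0 e21);
  rewrite ?compm0 ?addr0 ?add0r //.
  by apply: (biprod_ext B1); rewrite ?compDr -?comp_assoc
    ?(compAK e11) ?(compAK e22) ?(compA0 e12) ?(compA0 e21) ?compm0 ?addr0 ?add0r.
by apply: (biprod_ext B3); rewrite ?compDr -?comp_assoc
  ?(compAK f11) ?(compAK f22) ?(compA0 f12) ?(compA0 f21) ?compm0 ?addr0 ?add0r.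
Qed.
End Preadditive.

Section Triangulated.
Variables (C : addcat) (T : triang C).
Implicit Types X Y Z W : Obj C.

Lemma shm0 X Y : shm T (0 : Hom X Y) = 0.
Proof.
apply: (addrI (shm T (0 : Hom X Y))).
by rewrite -(@shm_add _ T) !addr0.
Qed.

Lemma sh_zero_obj Z : is_zero_obj Z -> is_zero_obj (sh T Z).
Proof. by move=> Z0; apply: idm_zero_obj; rewrite -shm_id (zero_obj_idm Z0) shm0. Qed.

Lemma shm_surj X Y (u : Hom (sh T X) (sh T Y)) : exists f, shm T f = u.
Proof. by case: (shm_bij T X Y) => k _ k_shm; exists (k u). Qed.

Lemma dist_rotl X Y Z (f : Hom X Y) (g : Hom Y Z) (h : Hom Z (sh T X)) :
  dist T f g h -> dist T g h (- shm T f).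
Proof. by move/dist_rot. Qed.

Lemma dist_comp0 X Y Z (f : Hom X Y) (g : Hom Y Z) (h : Hom Z (sh T X)) :
  dist T f g h -> g \oc f = 0.
Proof.
move=> tf; have [Z0 Z0P] := zero_ex C.
have [c [<- _]] := dist_morph (dist_id T X Z0P) tf (erefl (f \oc idm X)).
by rewrite compm0.
Qed.

Lemma dist_zero_idm Z0 W : is_zero_obj Z0 ->
  dist T (0 : Hom Z0 W) (idm W) (0 : Hom W (sh T Z0)).
Proof.
by move=> Z0P; apply/dist_rot; rewrite shm0 oppr0; exact: dist_id (sh_zero_obj Z0P).
Qed.

Lemma dist_factor X Y Z (f : Hom X Y) (g : Hom Y Z) (h : Hom Z (sh T X)) W
  (v : Hom Y W) : dist T f g h -> v \oc f = 0 -> exists s, v = s \oc g.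
Proof.
move=> tf vf; have [Z0 Z0P] := zero_ex C.
have vf0 : v \oc f = (0 : Hom Z0 W) \oc (0 : Hom X Z0) by rewrite vf comp0m.
have [c [cg _]] := dist_morph tf (dist_zero_idm W Z0P) vf0.
by exists c; rewrite cg comp1m.
Qed.

Lemma dist_endo_iso X Y Z (f : Hom X Y) (g : Hom Y Z) (h : Hom Z (sh T X))
  (t : Hom Z Z) : dist T f g h -> t \oc g = g -> h \oc t = h -> is_iso t.
Proof.
move=> tf tg ht.
have [s Hs] : exists s, idm Z - t = s \oc h.
  by apply: dist_factor (dist_rotl tf) _; rewrite compBl comp1m tg subrr.
have nilp : (idm Z - t) \oc (idm Z - t) = 0.
  by rewrite {1}Hs -comp_assoc compBr compm1 ht subrr compm0.
by have := is_iso_sub_nilp nilp; rewrite opprB addrC subrK.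
Qed.

Lemma dist_cone_retract X Y Z Y' W (f : Hom X Y) (g : Hom Y Z)
    (h : Hom Z (sh T X)) (b : Hom Y Y') (p : Hom Y' Y) (g' : Hom Y' W)
    (h' : Hom W (sh T X)) :
  dist T f g h -> dist T (b \oc f) g' h' -> p \oc b = idm Y ->
  exists (c : Hom Z W) (d : Hom W Z),
    [/\ c \oc g = g' \oc b, h' \oc c = h, d \oc c = idm Z,
        d \oc g' = g \oc p & h \oc d = h'].
Proof.
move=> tf tW pb.
have [c [cg hc]] := dist_morph tf tW (esym (compm1 (b \oc f))).
have pbf : p \oc (b \oc f) = f \oc idm X by rewrite (compAK pb) compm1.
have [d0 [d0g hd0]] := dist_morph tW tf pbf.
rewrite shm_id comp1m in hc; rewrite shm_id comp1m in hd0.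
have dcg : (d0 \oc c) \oc g = g.
  by rewrite -comp_assoc cg comp_assoc d0g -comp_assoc pb compm1.
have hdc : h \oc (d0 \oc c) = h by rewrite comp_assoc -hd0 -hc.
have [e [e_dc dc_e]] := dist_endo_iso tf dcg hdc.
have eg : e \oc g = g by rewrite -{1}dcg comp_assoc e_dc comp1m.
have he : h \oc e = h by rewrite -{1}hdc -comp_assoc dc_e compm1.
exists c, (e \oc d0); split => //.
- by rewrite -comp_assoc.
- by rewrite -comp_assoc d0g comp_assoc eg.
- by rewrite comp_assoc he hd0.
Qed.

(* The sum of a distinguished triangle with the triangle [0 -> A = A -> 0]. *)
Lemma dist_dsum X Y Z (f : Hom X Y) (g : Hom Y Z) (h : Hom Z (sh T X)) A S1 S2
    i1 i2 p1 p2 j1 j2 q1 q2 :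
  dist T f g h -> @is_biprod C S1 Y A i1 i2 p1 p2 ->
  @is_biprod C S2 Z A j1 j2 q1 q2 ->
  dist T (i1 \oc f) (j1 \oc (g \oc p1) + j2 \oc p2) (h \oc q1).
Proof.
move=> tf B1 B2; have [e11 e22 e12 e21 ip] := B1; have [f11 f22 f12 f21 jq] := B2.
have [W [g' [h' tW]]] := dist_ext T (i1 \oc f).
have [c [d [cg h'c dc dg' hd]]] := dist_cone_retract tf tW e11.
have [e [eg' ec]] : exists e : Hom W A, e \oc g' = p2 /\ e \oc c = 0.
  have [e0 e0g'] := dist_factor tW (compA0 e21 f).
  exists (e0 - e0 \oc (c \oc d)); split; rewrite compBl -!comp_assoc.
    by rewrite dg' (comp_assoc c) cg -!comp_assoc (comp_assoc e0) -e0g' (compA0 e21) subr0.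
  by rewrite dc compm1 subrr.
pose psi := j1 \oc d + j2 \oc e.
pose phi := c \oc q1 + g' \oc (i2 \oc q2).
have psi_phi : psi \oc phi = idm S2.
  apply: (biprod_ext B2); rewrite compm1 /psi /phi ?compDl ?compDr -?comp_assoc;
  rewrite ?(compAK f11) ?(compA0 f12) ?(compAK f22) ?(compA0 f21) ?compm0 ?addr0 ?add0r.
    by rewrite comp_assoc dc comp1m comp_assoc dg' -comp_assoc (compA0 e12) compm0 addr0.
  by rewrite comp_assoc ec comp0m add0r comp_assoc eg' (compAK e22).
have psi_g' : psi \oc g' = j1 \oc (g \oc p1) + j2 \oc p2.
  by rewrite /psi compDl -!comp_assoc dg' eg'.
have h_psi : (h \oc q1) \oc psi = h'.
  by rewrite /psi compDr -!comp_assoc (compAK f11) (compA0 f12) compm0 addr0 hd.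
have phi_psi : is_iso (phi \oc psi).
  apply: (dist_endo_iso tW).
    rewrite -comp_assoc psi_g' /phi compDl !compDr -?comp_assoc.
    rewrite (compAK f11) (compA0 f12) (compA0 f21) (compAK f22) !compm0 addr0 add0r.
    by rewrite (comp_assoc c) cg -comp_assoc -compDr ip compm1.
  rewrite comp_assoc /phi compDr (comp_assoc h' c) h'c (comp_assoc h' g').
  by rewrite (dist_comp0 (dist_rotl tW)) comp0m addr0.
apply: (dist_iso (is_iso_idm X) (is_iso_idm S1) (is_iso_retraction psi_phi phi_psi) _ _ _ tW).
- by rewrite comp1m compm1.
- by rewrite psi_g' compm1.
- by rewrite shm_id comp1m.
Qed.
End Triangulated.

Section DenseSubcategory.
Variables (C : addcat) (T : triang C) (D : Obj C -> Prop).
Hypothesis denseD : dense_sub T D.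
Implicit Types X Y Z W : Obj C.

Definition oplus X Y : Obj C :=
  proj1_sig (constructive_indefinite_description _ (dsum_ex C X Y)).

Lemma oplusP X Y : is_dsum (oplus X Y) X Y.
Proof. exact: proj2_sig (constructive_indefinite_description _ (dsum_ex C X Y)). Qed.

Definition zobj : Obj C :=
  proj1_sig (constructive_indefinite_description _ (zero_ex C)).

Lemma zobjP : is_zero_obj zobj.
Proof. exact: proj2_sig (constructive_indefinite_description _ (zero_ex C)). Qed.

Lemma oplus_iso X Y X' Y' : iso X X' -> iso Y Y' -> iso (oplus X Y) (oplus X' Y').
Proof. exact: dsum_iso (oplusP _ _) (oplusP _ _). Qed.

Lemma dsum_oplus S X Y : is_dsum S X Y -> iso S (oplus X Y).
Proof. by move=> SXY; apply: dsum_iso SXY (oplusP _ _) (iso_refl _) (iso_refl _). Qed.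

Lemma oplusC X Y : iso (oplus X Y) (oplus Y X).
Proof. exact/dsum_oplus/dsumC/oplusP. Qed.

Lemma oplusA X Y Z : iso (oplus (oplus X Y) Z) (oplus X (oplus Y Z)).
Proof. exact: dsumA (oplusP _ _) (oplusP _ _) (oplusP _ _) (oplusP _ _). Qed.

Lemma oplus0 X : iso (oplus X zobj) X.
Proof. exact: dsum_zero_obj zobjP (oplusP _ _). Qed.

Lemma oplus0l X : iso (oplus zobj X) X.
Proof. exact: iso_trans (oplusC _ _) (oplus0 X). Qed.

Lemma oplusAC X Y Z : iso (oplus (oplus X Y) Z) (oplus (oplus X Z) Y).
Proof.
apply: iso_trans (oplusA _ _ _) _; apply: iso_trans _ (iso_sym (oplusA _ _ _)).
exact: oplus_iso (iso_refl _) (oplusC _ _).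
Qed.

Lemma oplusCA X Y Z : iso (oplus X (oplus Y Z)) (oplus Y (oplus X Z)).
Proof.
apply: iso_trans (iso_sym (oplusA _ _ _)) _; apply: iso_trans _ (oplusA _ _ _).
exact: oplus_iso (oplusC _ _) (iso_refl _).
Qed.

Lemma dist_split S B A i1 i2 p1 p2 : @is_biprod C S B A i1 i2 p1 p2 ->
  exists g (h : Hom (oplus zobj A) (sh T B)), dist T i1 g h.
Proof.
move=> B1; have [j1 [j2 [q1 [q2 B2]]]] := oplusP zobj A.
have := dist_dsum (dist_id T B zobjP) B1 B2; rewrite compm1.
by exists (j1 \oc (0 \oc p1) + j2 \oc p2), (0 \oc q1).
Qed.

Lemma D_iso X Y : iso X Y -> D X -> D Y.
Proof. by case: denseD => [[isoD _ _ _] _]; apply: isoD. Qed.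

Lemma D_sh X : D X -> D (sh T X).
Proof. by case: denseD => [[_ shD _ _] _]; apply: shD. Qed.

Lemma D_unsh X : D (sh T X) -> D X.
Proof. by case: denseD => [[_ _ unshD _] _]; apply: unshD. Qed.

Lemma D_cone X Y Z (f : Hom X Y) (g : Hom Y Z) (h : Hom Z (sh T X)) :
  dist T f g h -> D X -> D Y -> D Z.
Proof. by case: denseD => [[_ _ _ coneD] _]; apply: coneD. Qed.

Lemma D_complement U : exists V S, is_dsum S U V /\ D S.
Proof. by case: denseD. Qed.

Lemma D_zobj : D zobj.
Proof.
have [_ [S [_ DS]]] := D_complement zobj.
exact: (D_cone (dist_id T S zobjP) DS DS).
Qed.

Lemma D_mid X Y Z (f : Hom X Y) (g : Hom Y Z) (h : Hom Z (sh T X)) :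
  dist T f g h -> D X -> D Z -> D Y.
Proof.
move=> t DX DZ; apply: D_unsh.
exact: D_cone (dist_rotl (dist_rotl t)) DZ (D_sh DX).
Qed.

Lemma D_dsum S B A : is_dsum S B A -> D B -> D A -> D S.
Proof.
case=> i1 [i2 [p1 [p2 /dist_split [g [h t]]]]] DB DA.
exact: D_mid t DB (D_iso (iso_sym (oplus0l A)) DA).
Qed.

Lemma D_dsum_cancel S B A : is_dsum S B A -> D S -> D B -> D A.
Proof.
case=> i1 [i2 [p1 [p2 /dist_split [g [h t]]]]] DS DB.
exact: D_iso (oplus0l A) (D_cone t DB DS).
Qed.

Definition eqvD X Y :=
  exists D1 D2, [/\ D D1, D D2 & iso (oplus X D1) (oplus Y D2)].

Lemma eqvD_iso X Y : iso X Y -> eqvD X Y.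
Proof.
move=> XY; exists zobj, zobj; split; try exact: D_zobj.
exact: oplus_iso XY (iso_refl _).
Qed.

Lemma eqvD_refl X : eqvD X X.
Proof. exact/eqvD_iso/iso_refl. Qed.

Lemma eqvD_sym X Y : eqvD X Y -> eqvD Y X.
Proof. by case=> D1 [D2 [DD1 DD2 XY]]; exists D2, D1; split => //; exact: iso_sym. Qed.

Lemma eqvD_trans X Y Z : eqvD X Y -> eqvD Y Z -> eqvD X Z.
Proof.
case=> D1 [D2 [DD1 DD2 XY]] [D3 [D4 [DD3 DD4 YZ]]].
exists (oplus D1 D3), (oplus D4 D2); split.
- exact: D_dsum (oplusP _ _) DD1 DD3.
- exact: D_dsum (oplusP _ _) DD4 DD2.
apply: iso_trans (iso_sym (oplusA _ _ _)) _.
apply: iso_trans (oplus_iso XY (iso_refl _)) _.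
apply: iso_trans (oplusAC _ _ _) _.
apply: iso_trans (oplus_iso YZ (iso_refl _)) _.
exact: oplusA.
Qed.

Lemma eqvD_oplusr X Y W : eqvD X Y -> eqvD (oplus X W) (oplus Y W).
Proof.
case=> D1 [D2 [DD1 DD2 XY]]; exists D1, D2; split => //.
apply: iso_trans (oplusAC _ _ _) _.
exact: iso_trans (oplus_iso XY (iso_refl _)) (oplusAC _ _ _).
Qed.

Lemma eqvD_oplus X Y X' Y' : eqvD X X' -> eqvD Y Y' -> eqvD (oplus X Y) (oplus X' Y').
Proof.
move=> XX' YY'; apply: eqvD_trans (eqvD_oplusr _ XX') _.
apply: eqvD_trans (eqvD_iso (oplusC _ _)) _.
exact: eqvD_trans (eqvD_oplusr _ YY') (eqvD_iso (oplusC _ _)).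
Qed.

Lemma eqvD_oplusDr X E : D E -> eqvD (oplus X E) X.
Proof. by move=> DE; exists zobj, E; split=> //; [exact: D_zobj | exact: oplus0]. Qed.

Lemma eqvD0 X : eqvD X zobj <-> D X.
Proof.
split=> [[D1 [D2 [DD1 DD2 X0]]] | DX].
  have DXD1 : D (oplus X D1).
    by apply: D_iso (iso_sym X0) _; exact: D_iso (iso_sym (oplus0l _)) DD2.
  exact: D_dsum_cancel (dsumC (oplusP X D1)) DXD1 DD1.
exact: eqvD_trans (eqvD_iso (iso_sym (oplus0l X))) (eqvD_oplusDr _ DX).
Qed.

(* Density supplies [V] with [Y (+) V] in [D]; summing with [0 -> V = V -> 0]
   gives a triangle [X -> Y (+) V -> Z (+) V] whose first two vertices lie in [D]. *)
Lemma eqvD_dist_fst X Y Z (f : Hom X Y) (g : Hom Y Z) (h : Hom Z (sh T X)) :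
  dist T f g h -> D X -> eqvD Y Z.
Proof.
move=> t DX.
have [V [S [[i1 [i2 [p1 [p2 B1]]]] DS]]] := D_complement Y.
have [j1 [j2 [q1 [q2 B2]]]] := oplusP Z V.
have DZV : D (oplus Z V) := D_cone (dist_dsum t B1 B2) DX DS.
exists (oplus Z V), S; split => //.
apply: iso_trans (oplusCA _ _ _) _; apply: oplus_iso (iso_refl _) _.
by apply/iso_sym/dsum_oplus; exists i1, i2, p1, p2.
Qed.

Lemma eqvD_dist_thd X Y Z (f : Hom X Y) (g : Hom Y Z) (h : Hom Z (sh T X)) :
  dist T f g h -> D Z -> eqvD X Y.
Proof.
move=> t DZ.
have [Z' [k [k' [k'k kk']]]] := sh_esurj T Z.
have DZ' : D Z' by apply: D_unsh; apply: D_iso DZ; exists k', k.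
have t' : dist T f (k' \oc g) (h \oc k).
  apply: (dist_iso (is_iso_idm X) (is_iso_idm Y) (ex_intro _ k (conj kk' k'k)) _ _ _ t).
  - by rewrite comp1m compm1.
  - by rewrite compm1.
  - by rewrite shm_id comp1m -comp_assoc kk' compm1.
have [h0 h0E] := shm_surj (- (h \oc k)).
have t'' : dist T h0 f (k' \oc g) by apply/dist_rot; rewrite h0E opprK.
exact: eqvD_dist_fst t'' DZ'.
Qed.

Lemma eqvD_dist X Y Z (f : Hom X Y) (g : Hom Y Z) (h : Hom Z (sh T X)) :
  dist T f g h -> eqvD Y (oplus X Z).
Proof.
move=> t.
have [V [S [[j1 [j2 [q1 [q2 B2]]]] DS]]] := D_complement Z.
have [i1 [i2 [p1 [p2 B1]]]] := oplusP Y V.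
have XYV : eqvD X (oplus Y V) := eqvD_dist_thd (dist_dsum t B1 B2) DS.
have DVZ : D (oplus V Z).
  apply: D_iso DS; apply: iso_trans _ (oplusC _ _).
  by apply: dsum_oplus; exists j1, j2, q1, q2.
apply: eqvD_sym; apply: eqvD_trans (eqvD_oplusr _ XYV) _.
exact: eqvD_trans (eqvD_iso (oplusA _ _ _)) (eqvD_oplusDr _ DVZ).
Qed.

Fixpoint osum (l : seq (Obj C)) : Obj C :=
  if l is X :: l' then oplus X (osum l') else zobj.

Fixpoint gens (l : seq (Obj C)) (X : Obj C) : int :=
  if l is Y :: l' then gen Y X + gens l' X else 0.

Lemma osum_cat l1 l2 : iso (osum (l1 ++ l2)) (oplus (osum l1) (osum l2)).
Proof.
elim: l1 => /= [|X l IHl]; first exact: iso_sym (oplus0l _).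
exact: iso_trans (oplus_iso (iso_refl _) IHl) (iso_sym (oplusA _ _ _)).
Qed.

Lemma osum_mid l1 X l2 : iso (osum (l1 ++ X :: l2)) (oplus X (osum (l1 ++ l2))).
Proof.
elim: l1 => /= [|Y l IHl]; first exact: iso_refl.
exact: iso_trans (oplus_iso (iso_refl _) IHl) (oplusCA _ _ _).
Qed.

Lemma gen_ge0 Y X : 0 <= gen Y X.
Proof. by rewrite /gen; case: excluded_middle_informative. Qed.

Lemma gen_id X : gen X X = 1.
Proof. by rewrite /gen; case: excluded_middle_informative => // - []; exact: iso_refl. Qed.

Lemma gen_iso Y Y' : iso Y Y' -> gen Y =1 gen Y'.
Proof.
move=> YY' X; rewrite /gen.
case: excluded_middle_informative => XY; case: excluded_middle_informative => XY' //.
  by case: XY'; exact: iso_trans XY YY'.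
by case: XY; exact: iso_trans XY' (iso_sym YY').
Qed.

Lemma gen_neq0 Y X : gen Y X != 0 -> iso X Y.
Proof. by rewrite /gen; case: excluded_middle_informative. Qed.

Lemma gens_ge0 l X : 0 <= gens l X.
Proof. by elim: l => //= Y l IHl; rewrite addr_ge0 ?gen_ge0. Qed.

Lemma gens_cat l1 l2 X : gens (l1 ++ l2) X = gens l1 X + gens l2 X.
Proof. by elim: l1 => /= [|Y l IHl]; rewrite ?add0r // IHl addrA. Qed.

Lemma gens_nseq n U X : gens (nseq n U) X = gen U X *+ n.
Proof. by elim: n => //= n IHn; rewrite IHn mulrS. Qed.

Lemma gens_neq0 l X : gens l X != 0 ->
  exists l1 Y l2, l = l1 ++ Y :: l2 /\ iso X Y.
Proof.
elim: l => //= Y l IHl.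
have [/eqP -> | /gen_neq0 XY] := boolP (gen Y X == 0); last first.
  by exists [::], Y, l.
rewrite add0r => /IHl [l1 [Z [l2 [-> XZ]]]].
by exists (Y :: l1), Z, l2.
Qed.

Lemma osum_iso_gens l1 l2 : gens l1 =1 gens l2 -> iso (osum l1) (osum l2).
Proof.
elim: l1 l2 => [|X l1 IHl] l2 l12.
  case: l2 l12 => [|Y l2] l12; first exact: iso_refl.
  have := l12 Y; rewrite /= gen_id; have := gens_ge0 l2 Y; lia.
have /gens_neq0 [l21 [Y [l22 [l2E XY]]]] : gens l2 X != 0.
  by rewrite -l12 /= gen_id; have := gens_ge0 l1 X; lia.
have l1_l2' : gens l1 =1 gens (l21 ++ l22).
  by move=> Z; have := l12 Z; rewrite l2E /= !gens_cat /= (gen_iso XY Z); lia.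
rewrite l2E /=; apply: iso_trans _ (iso_sym (osum_mid _ _ _)).
exact: oplus_iso XY (IHl _ l1_l2').
Qed.

Lemma groth_rel_eqvD a : groth_rel T a ->
  exists P N, a =1 (fun X => gens P X - gens N X) /\ eqvD (osum P) (osum N).
Proof.
elim=> {a} [U V W f g h t | | a b _ [Pa [Na [aE Ha]]] _ [Pb [Nb [bE Hb]]]
           | a _ [P [N [aE H]]]].
- exists [:: V], [:: U; W]; split; first by move=> X /=; rewrite !addr0 opprD addrA.
  apply: eqvD_trans (eqvD_iso (oplus0 _)) _; apply: eqvD_trans (eqvD_dist t) _.
  exact/eqvD_iso/oplus_iso/iso_sym/oplus0/iso_refl.
- by exists [::], [::]; split=> //; exact: eqvD_refl.
- exists (Pa ++ Pb), (Na ++ Nb); split.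
    by move=> X; rewrite aE bE !gens_cat opprD addrACA.
  apply: eqvD_trans (eqvD_iso (osum_cat _ _)) _.
  exact: eqvD_trans (eqvD_oplus Ha Hb) (eqvD_iso (iso_sym (osum_cat _ _))).
- exists N, P; split; first by move=> X; rewrite aE opprB.
  exact: eqvD_sym.
Qed.

Lemma is_pow_osum U n : exists S, is_pow U n S /\ iso S (osum (nseq n U)).
Proof.
elim: n => /= [|n [S [US SU]]]; first by exists zobj; split; [exact: zobjP | exact: iso_refl].
exists (oplus S U); split; first by exists S; split=> //; exact: oplusP.
exact: iso_trans (oplusC _ _) (oplus_iso (iso_refl _) SU).
Qed.

Lemma groth_torsion_pow U : groth_torsion T U ->
  exists n S, [/\ (0 < n)%N, is_pow U n S & D S].
Proof.
case=> n [n_gt0 /groth_rel_eqvD [P [N [nUE PN]]]].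
have P_nUN : gens P =1 gens (nseq n U ++ N).
  by move=> X; rewrite gens_cat gens_nseq nUE subrK.
have N_nUN : eqvD (osum N) (oplus (osum (nseq n U)) (osum N)).
  apply: eqvD_trans (eqvD_sym PN) (eqvD_iso _).
  exact: iso_trans (osum_iso_gens P_nUN) (osum_cat _ _).
have [V [S [NV DS]]] := D_complement (osum N).
have DNV : D (oplus (osum N) V) by apply: D_iso DS; exact: dsum_oplus.
have nU0 : eqvD (osum (nseq n U)) zobj.
  apply: eqvD_trans (eqvD_sym (eqvD_oplusDr _ DNV)) _.
  apply: eqvD_trans (eqvD_iso (iso_sym (oplusA _ _ _))) _.
  apply: eqvD_trans (eqvD_oplusr _ (eqvD_sym N_nUN)) _.
  exact/eqvD0.
have [Un [UUn Un_osum]] := is_pow_osum U n.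
exists n, Un; split=> //.
exact: D_iso (iso_sym Un_osum) (proj1 (eqvD0 _) nU0).
Qed.
End DenseSubcategory.

Theorem lemma3p9 (C : addcat) (T : triang C) (D : Obj C -> Prop) :
  dense_sub T D -> radical_sub D ->
  forall U : Obj C, groth_torsion T U -> D U.
Proof.
move=> denseD radD U /(groth_torsion_pow denseD) [n [S [n_gt0 US DS]]].
exact: radD n_gt0 US DS.
Qed.
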